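(* Let $\underline s\in\mathbb{R}$ and $f,g\in\mathcal{F}_{\underline s}$ with $f\succsim_{\mathrm w}g$. Then $\mathcal{I}^{\mathrm w}_{f,g}=\{I\in\mathcal{K}([0,1]):\ I_f\le I\le I_g,\ \partial I(X)\subseteq[\underline s,f(1)]\}$ is a convex function interval, and $\varphi\in\mathcal{F}_{\underline s}$ satisfies $f\succsim_{\mathrm w}\varphi\succsim_{\mathrm w}g$ if and only if there exists $I\in\mathcal{I}^{\mathrm w}_{f,g}$ with $I=I_\varphi$.
   Context: $X=[0,1]$, $\mathcal{F}_{\underline s}=\{f\in L^1(X): f$ non-decreasing, $f(0)\ge\underline s\}$, $m_f=\int_0^1 f$, $I_\varphi(x)=\int_0^x\varphi(s)\,\mathrm{d}s-m_\varphi$. $f\succsim_{\mathrm w}g$ means $\int_0^x f-m_f\le\int_0^x g-m_g$ for all $x\in X$. $\mathcal{K}([0,1])$ is the set of continuous convex functions, $\partial I(X)=\bigcup_{x\in(0,1)}\partial I(x)$. A convex function interval is a set $\{u\in\mathcal{K}(X):\underline u\le u\le\bar u,\ \partial u(X)\subseteq[\underline s,\bar s]\}$ with $\underline u\le\bar u$ in $\mathcal{K}(X)$ and $\partial\underline u(X),\partial\bar u(X)\subseteq[\underline s,\bar s]$. *)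

From Stdlib Require Import Reals.
From Coquelicot Require Import Coquelicot.
Open Scope R_scope.

Definition inX (x : R) : Prop := 0 <= x <= 1.

(* F_s : nondecreasing (on X) integrable functions with f(0) >= s.
   For nondecreasing functions on [0,1], Riemann and Lebesgue integrability
   coincide (both hold), and so do the integrals. *)
Definition Fs (s : R) (f : R -> R) : Prop :=
  (forall x y, inX x -> inX y -> x <= y -> f x <= f y) /\
  s <= f 0 /\ ex_RInt f 0 1.

Definition mean (f : R -> R) : R := RInt f 0 1.

Definition Iphi (phi : R -> R) (x : R) : R := RInt phi 0 x - mean phi.

Definition wdom (f g : R -> R) : Prop :=
  forall x, inX x -> Iphi f x <= Iphi g x.

(* K(X): continuous convex functions on [0,1] (only values on X matter). *)
Definition cont_on_X (u : R -> R) : Prop :=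
  forall x, inX x -> forall eps, 0 < eps -> exists delta, 0 < delta /\
    forall y, inX y -> Rabs (y - x) < delta -> Rabs (u y - u x) < eps.

Definition convex_on_X (u : R -> R) : Prop :=
  forall x y t, inX x -> inX y -> 0 <= t <= 1 ->
    u (t * x + (1 - t) * y) <= t * u x + (1 - t) * u y.

Definition inK (u : R -> R) : Prop := cont_on_X u /\ convex_on_X u.

Definition subgrad (u : R -> R) (x p : R) : Prop :=
  forall y, inX y -> u x + p * (y - x) <= u y.

Definition subdiff_in (u : R -> R) (a b : R) : Prop :=
  forall x p, 0 < x < 1 -> subgrad u x p -> a <= p <= b.

Definition CFI (ul ub : R -> R) (sl sb : R) (u : R -> R) : Prop :=
  inK u /\ (forall x, inX x -> ul x <= u x <= ub x) /\ subdiff_in u sl sb.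

Definition is_CFI (S : (R -> R) -> Prop) : Prop :=
  exists (ul ub : R -> R) (sl sb : R),
    inK ul /\ inK ub /\ (forall x, inX x -> ul x <= ub x) /\
    subdiff_in ul sl sb /\ subdiff_in ub sl sb /\
    forall u, S u <-> CFI ul ub sl sb u.

Definition Iw (s : R) (f g : R -> R) (I : R -> R) : Prop :=
  inK I /\ (forall x, inX x -> Iphi f x <= I x <= Iphi g x) /\
  subdiff_in I s (f 1).

(* The weak-dominance interval is the interval between I_f and I_g in the
   pointwise order, so everything reduces to one fact about a single
   nondecreasing h in F_s: I_h is Lipschitz and convex with h(x) a subgradient
   at x, and any subgradient at an interior x lies between h(0) and h(y) for
   every y > x.  When f dominates h weakly, comparing the tails
   int_y^1 h <= int_y^1 f gives h(y) <= f(1) for y < 1, which bounds the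
   subdifferential of I_h by [s, f(1)]. *)
From Stdlib Require Import Reals Lra.
From Coquelicot Require Import Coquelicot.
Open Scope R_scope.

Lemma convex_on_X_of_subgrad (u : R -> R) :
  (forall x, inX x -> exists p, subgrad u x p) -> convex_on_X u.
Proof.
  intros Hsub x y t Hx Hy Ht.
  set (z := t * x + (1 - t) * y).
  assert (Hz : inX z) by (unfold z, inX in *; nra).
  destruct (Hsub z Hz) as [p Hp].
  pose proof (Hp x Hx) as Hpx; pose proof (Hp y Hy) as Hpy.
  assert (Ht0 : 0 <= t) by lra; assert (Ht1 : 0 <= 1 - t) by lra.
  pose proof (Rmult_le_compat_l t _ _ Ht0 Hpx).
  pose proof (Rmult_le_compat_l (1 - t) _ _ Ht1 Hpy).
  replace (u z) with (t * (u z + p * (x - z)) + (1 - t) * (u z + p * (y - z)))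
    by (unfold z; ring).
  lra.
Qed.

Lemma cont_on_X_of_lipschitz (u : R -> R) (M : R) : 0 <= M ->
  (forall x y, inX x -> inX y -> Rabs (u y - u x) <= M * Rabs (y - x)) ->
  cont_on_X u.
Proof.
  intros HM Hlip x Hx eps Heps.
  exists (eps / (M + 1)); split; [apply Rdiv_lt_0_compat; lra |].
  intros y Hy Hd.
  assert (M * (eps / (M + 1)) < eps).
  { apply (Rmult_lt_reg_r (M + 1)); [lra |].
    replace (M * (eps / (M + 1)) * (M + 1)) with (M * eps) by (field; lra).
    nra. }
  pose proof (Hlip x y Hx Hy).
  pose proof (Rmult_le_compat_l M _ _ HM (Rlt_le _ _ Hd)).
  lra.
Qed.

Section NondecreasingPrimitive.

Variable h : R -> R.
Hypothesis h_mono : forall x y, inX x -> inX y -> x <= y -> h x <= h y.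
Hypothesis h_int : ex_RInt h 0 1.

Lemma ex_RInt_sub a b : 0 <= a -> a <= b -> b <= 1 -> ex_RInt h a b.
Proof.
  intros. apply (ex_RInt_Chasles_2 h 0 a b); [lra |].
  apply (ex_RInt_Chasles_1 h 0 b 1); [lra | exact h_int].
Qed.

Lemma RInt_0_sub x y : 0 <= x -> x <= y -> y <= 1 ->
  RInt h 0 y - RInt h 0 x = RInt h x y.
Proof.
  intros. rewrite <- (RInt_Chasles h 0 x y); try (apply ex_RInt_sub; lra).
  unfold plus; simpl; ring.
Qed.

Lemma RInt_mono_bounds a b : 0 <= a -> a <= b -> b <= 1 ->
  h a * (b - a) <= RInt h a b <= h b * (b - a).
Proof.
  intros.
  assert (Hc : forall c, RInt (fun _ => c) a b = c * (b - a))
    by (intros c; rewrite RInt_const; unfold scal; simpl; unfold mult; simpl; ring).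
  rewrite <- !Hc. split; apply RInt_le; auto;
    try apply ex_RInt_const; try (apply ex_RInt_sub; lra);
    intros; apply h_mono; unfold inX; lra.
Qed.

Lemma Iphi_sub x y : 0 <= x -> x <= y -> y <= 1 -> Iphi h y - Iphi h x = RInt h x y.
Proof. intros. unfold Iphi. rewrite <- (RInt_0_sub x y) by lra. ring. Qed.

Lemma Iphi_subgrad x : inX x -> subgrad (Iphi h) x (h x).
Proof.
  intros Hx y Hy; unfold inX in *.
  destruct (Rle_dec x y) as [Hxy | Hyx].
  - pose proof (Iphi_sub x y ltac:(lra) Hxy ltac:(lra)).
    pose proof (RInt_mono_bounds x y ltac:(lra) Hxy ltac:(lra)). lra.
  - pose proof (Iphi_sub y x ltac:(lra) ltac:(lra) ltac:(lra)).
    pose proof (RInt_mono_bounds y x ltac:(lra) ltac:(lra) ltac:(lra)). nra.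
Qed.

Lemma Iphi_lipschitz x y : inX x -> inX y ->
  Rabs (Iphi h y - Iphi h x) <= (Rabs (h 0) + Rabs (h 1)) * Rabs (y - x).
Proof.
  assert (Hb : forall z, inX z -> Rabs (h z) <= Rabs (h 0) + Rabs (h 1)).
  { intros z Hz.
    pose proof (h_mono 0 z ltac:(unfold inX; lra) Hz ltac:(unfold inX in Hz; lra)).
    pose proof (h_mono z 1 Hz ltac:(unfold inX; lra) ltac:(unfold inX in Hz; lra)).
    pose proof (Rle_abs (h 1)); pose proof (Rabs_pos (h 0)); pose proof (Rabs_pos (h 1)).
    pose proof (Rle_abs (- h 0)); rewrite Rabs_Ropp in *.
    apply Rabs_le; lra. }
  assert (Hle : forall a b, inX a -> inX b -> a <= b ->
            Rabs (Iphi h b - Iphi h a) <= (Rabs (h 0) + Rabs (h 1)) * (b - a)).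
  { intros a b Ha Hb' Hab.
    destruct (proj1 (Rabs_le_between _ _) (Hb a Ha)) as [Ha_lo _].
    destruct (proj1 (Rabs_le_between _ _) (Hb b Hb')) as [_ Hb_hi].
    unfold inX in *; rewrite Iphi_sub by lra.
    pose proof (RInt_mono_bounds a b ltac:(lra) Hab ltac:(lra)).
    assert (Hba : 0 <= b - a) by lra.
    pose proof (Rmult_le_compat_r _ _ _ Hba Ha_lo).
    pose proof (Rmult_le_compat_r _ _ _ Hba Hb_hi).
    apply Rabs_le; lra. }
  intros Hx Hy. destruct (Rle_dec x y).
  - rewrite (Rabs_right (y - x)) by lra. auto.
  - rewrite Rabs_minus_sym, (Rabs_left (y - x)) by lra.
    replace (- (y - x)) with (x - y) by ring. apply Hle; auto; lra.
Qed.

Lemma Iphi_inK : inK (Iphi h).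
Proof.
  split.
  - apply (cont_on_X_of_lipschitz _ (Rabs (h 0) + Rabs (h 1))).
    + pose proof (Rabs_pos (h 0)); pose proof (Rabs_pos (h 1)); lra.
    + exact Iphi_lipschitz.
  - apply convex_on_X_of_subgrad. intros x Hx. exists (h x). exact (Iphi_subgrad x Hx).
Qed.

Lemma subgrad_Iphi_ge x p : 0 < x < 1 -> subgrad (Iphi h) x p -> h 0 <= p.
Proof.
  intros Hx Hp. specialize (Hp 0 ltac:(unfold inX; lra)).
  pose proof (Iphi_sub 0 x ltac:(lra) ltac:(lra) ltac:(lra)).
  pose proof (RInt_mono_bounds 0 x ltac:(lra) ltac:(lra) ltac:(lra)).
  nra.
Qed.

Lemma subgrad_Iphi_le x p y : 0 < x < 1 -> subgrad (Iphi h) x p -> x < y <= 1 ->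
  p <= h y.
Proof.
  intros Hx Hp Hy. specialize (Hp y ltac:(unfold inX; lra)).
  pose proof (Iphi_sub x y ltac:(lra) ltac:(lra) ltac:(lra)).
  pose proof (RInt_mono_bounds x y ltac:(lra) ltac:(lra) ltac:(lra)).
  nra.
Qed.

End NondecreasingPrimitive.

Lemma wdom_le_end s f h y : Fs s f -> Fs s h -> wdom f h -> 0 <= y < 1 ->
  h y <= f 1.
Proof.
  intros [fm [_ fi]] [hm [_ hi]] W Hy. specialize (W y ltac:(unfold inX; lra)).
  pose proof (Iphi_sub f fi y 1 ltac:(lra) ltac:(lra) ltac:(lra)).
  pose proof (Iphi_sub h hi y 1 ltac:(lra) ltac:(lra) ltac:(lra)).
  assert (Iphi f 1 = 0 /\ Iphi h 1 = 0) as [] by (unfold Iphi, mean; lra).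
  pose proof (RInt_mono_bounds f fm fi y 1 ltac:(lra) ltac:(lra) ltac:(lra)).
  pose proof (RInt_mono_bounds h hm hi y 1 ltac:(lra) ltac:(lra) ltac:(lra)).
  nra.
Qed.

Lemma Iphi_subdiff_in s f h : Fs s f -> Fs s h -> wdom f h ->
  subdiff_in (Iphi h) s (f 1).
Proof.
  intros Hf Hh W x p Hx Hp. pose proof Hh as [hm [hs hi]]. split.
  - pose proof (subgrad_Iphi_ge h hm hi x p Hx Hp). lra.
  - pose proof (subgrad_Iphi_le h hm hi x p ((x + 1) / 2) Hx Hp ltac:(lra)).
    pose proof (wdom_le_end s f h ((x + 1) / 2) Hf Hh W ltac:(lra)). lra.
Qed.

Lemma Iphi_Iw s f g h : Fs s f -> Fs s h -> wdom f h -> wdom h g -> Iw s f g (Iphi h).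
Proof.
  intros Hf Hh Wfh Whg. pose proof Hh as [hm [_ hi]].
  split; [exact (Iphi_inK h hm hi) |].
  split; [intros x Hx; split; auto |].
  exact (Iphi_subdiff_in s f h Hf Hh Wfh).
Qed.

Theorem lemma4 (s : R) (f g : R -> R) :
  Fs s f -> Fs s g -> wdom f g ->
  is_CFI (Iw s f g) /\
  (forall phi : R -> R, Fs s phi ->
     ((wdom f phi /\ wdom phi g) <->
      exists I : R -> R, Iw s f g I /\ (forall x, inX x -> I x = Iphi phi x))).
Proof.
  intros Hf Hg W.
  assert (Wff : wdom f f) by (intros x _; lra).
  assert (Wgg : wdom g g) by (intros x _; lra).
  destruct (Iphi_Iw s f g f Hf Hf Wff W) as [Kf [_ Sf]].
  destruct (Iphi_Iw s f g g Hf Hg W Wgg) as [Kg [_ Sg]].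
  split.
  - exists (Iphi f), (Iphi g), s, (f 1).
    exact (conj Kf (conj Kg (conj W (conj Sf (conj Sg (fun u => iff_refl _)))))).
  - intros phi Hphi. split.
    + intros [W1 W2]. exists (Iphi phi). split; [apply Iphi_Iw |]; auto.
    + intros [I [[_ [HB _]] HE]].
      split; intros x Hx; rewrite <- HE by auto; apply HB; auto.
Qed.
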